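(* Consider the stochastic MPC scheme described in the context, i.e. the system $x(k+1)=Ax(k)+Bu(k)+w(k)$ controlled by $u(k)=Ke_0(k)+v_0^*(k)$, where $v^*(k)$ is an optimal solution of problem $(\mathcal{P}_k)$ and the nominal state is updated by $z_0(k)=z_1(k-1)$ with $z_0(0)=z(0)=x(0)$. Suppose the terminal set $\mathcal{Z}_f$ satisfies the terminal invariance assumption stated in the context. If problem $(\mathcal{P}_0)$ is feasible for $x(0)=z(0)$, then the problem is recursively feasible, i.e. $(\mathcal{P}_k)$ is feasible for all times $0\le k\le \bar N-N$.
   Context: System: $x(k+1)=Ax(k)+Bu(k)+w(k)$ with $x(k)\in\mathbb{R}^{n_x}$, $u(k)\in\mathbb{R}^{n_u}$, over a finite horizon $\bar N$; the disturbance sequence $W=[w(0)^\top,\dots,w(\bar N)^\top]^\top$ is a random vector with distribution $\mathcal{D}^W$ (not necessarily i.i.d. or zero mean), with known first two moments. $\mathcal{X}\subseteq\mathbb{R}^{n_x}$, $\mathcal{U}\subseteq\mathbb{R}^{n_u}$ are convex sets, $p_x,p_u\in[0,1]$ probability levels. For sets, $\mathcal{A}\ominus\mathcal{B}=\{a\in\mathcal{A}: a+b\in\mathcal{A}\ \forall b\in\mathcal{B}\}$ (Pontryagin difference). A fixed gain $K\in\mathbb{R}^{n_u\times n_x}$ is given. Let $e$ denote the process $e(k+1)=(A+BK)e(k)+w(k)$. For each $0\le k\le\bar N$, $\mathcal{R}^x_k$ is a set with $\Pr(e(k)\in\mathcal{R}^x_k\mid e(0)=0)\ge p_x$ and $\mathcal{R}^u_k$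 a set with $\Pr(Ke(k)\in\mathcal{R}^u_k\mid Ke(0)=0)\ge p_u$ (probabilistic $k$-step reachable sets). A set $\mathcal{R}_f$ satisfies $\mathcal{R}_f\supseteq\bigcup_{k=0}^{\bar N}\mathcal{R}^x_k$ and $K\mathcal{R}_f\supseteq\bigcup_{k=0}^{\bar N}\mathcal{R}^u_k$. Terminal invariance assumption: $\mathcal{Z}_f\subseteq\mathcal{X}\ominus\mathcal{R}_f$, $(A+BK)z\in\mathcal{Z}_f$ for all $z\in\mathcal{Z}_f$, and $K\mathcal{Z}_f\subseteq\mathcal{U}\ominus K\mathcal{R}_f$. Prediction horizon $N\le\bar N$; stage costs $l_k$ and terminal cost $l_f$ are given. Problem $(\mathcal{P}_k)$ at time $k$: minimize over $v_0,\dots,v_{N-1}$ the cost $\mathbb{E}_{W_k}\big(l_f(x_N)+\sum_{i=0}^{N-1}l_{k+i}(x_i,u_i)\big)$ subject to $x_{i}=z_{i}+e_{i}$, $u_i=Ke_i+v_i$, $z_{i+1}=Az_i+Bv_i$, $e_{i+1}=(A+BK)e_i+w_i$, where $W_k=[w_0^\top,\dots,w_N^\top]^\top$ is distributed according to the conditional distribution of $[w(k)^\top,\dots,w(k+N)^\top]^\top$ given the realized $[w(0)^\top,\dots,w(k-1)^\top]^\top$; constraints $z_i\in\mathcal{X}\ominus\mathcal{R}^x_{i+k}$, $v_i\in\mathcal{U}\ominus\mathcal{R}^u_{i+k}$ for $i=0,\dots,N-1$, and $z_N\in\mathcal{Z}_f$; initialization $x_0=x(k)$, $z_0=z_1(k-1)$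 (the value of $z_1$ predicted at time $k-1$; $z_0(0)=x(0)$), $e_0=x_0-z_0$. The closed-loop nominal state is $z(k)=z_0(k)$ and closed-loop error $e(k)=x(k)-z(k)$; the applied input is $u(k)=Ke_0(k)+v_0^*(k)$ with $v^*(k)$ optimal for $(\mathcal{P}_k)$. *)

From HB Require Import structures.
From mathcomp Require Import all_boot all_order all_algebra.
From mathcomp Require Import all_classical all_reals.
From mathcomp Require Import ereal topology normedtype measure probability convex.
Set Implicit Arguments. Unset Strict Implicit. Unset Printing Implicit Defensive.
Import Order.TTheory GRing.Theory Num.Theory.
Local Open Scope classical_set_scope.
Local Open Scope ring_scope.

Definition pdiff (V : zmodType) (S Q : set V) : set V :=
  [set a | S a /\ (forall b, Q b -> S (a + b))].

Fixpoint nom_pred (R : ringType) (nx nu : nat) (A : 'M[R]_nx) (B : 'M[R]_(nx, nu))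
  (z0 : 'cV[R]_nx) (v : nat -> 'cV[R]_nu) (i : nat) : 'cV[R]_nx :=
  match i with
  | 0 => z0
  | i'.+1 => A *m nom_pred A B z0 v i' + B *m v i'
  end.

Fixpoint err_proc (R : ringType) (nx nu : nat) (A : 'M[R]_nx) (B : 'M[R]_(nx, nu))
  (K : 'M[R]_(nu, nx)) (w : nat -> 'cV[R]_nx) (k : nat) : 'cV[R]_nx :=
  match k with
  | 0 => 0
  | k'.+1 => (A + B *m K) *m err_proc A B K w k' + w k'
  end.

Definition P_feasible_sol (R : ringType) (nx nu : nat) (A : 'M[R]_nx) (B : 'M[R]_(nx, nu))
  (X : set 'cV[R]_nx) (U : set 'cV[R]_nu)
  (Rx : nat -> set 'cV[R]_nx) (Ru : nat -> set 'cV[R]_nu) (Zf : set 'cV[R]_nx)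
  (N k : nat) (z0 : 'cV[R]_nx) (v : nat -> 'cV[R]_nu) : Prop :=
  (forall i, (i < N)%N -> pdiff X (Rx (i + k)%N) (nom_pred A B z0 v i)) /\
  (forall i, (i < N)%N -> pdiff U (Ru (i + k)%N) (v i)) /\
  Zf (nom_pred A B z0 v N).

Definition P_feasible (R : ringType) (nx nu : nat) (A : 'M[R]_nx) (B : 'M[R]_(nx, nu))
  (X : set 'cV[R]_nx) (U : set 'cV[R]_nu)
  (Rx : nat -> set 'cV[R]_nx) (Ru : nat -> set 'cV[R]_nu) (Zf : set 'cV[R]_nx)
  (N k : nat) (z0 : 'cV[R]_nx) : Prop :=
  exists v, P_feasible_sol A B X U Rx Ru Zf N k z0 v.

Definition P_optimal (R : realType) (nx nu : nat) (A : 'M[R]_nx) (B : 'M[R]_(nx, nu))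
  (X : set 'cV[R]_nx) (U : set 'cV[R]_nu)
  (Rx : nat -> set 'cV[R]_nx) (Ru : nat -> set 'cV[R]_nu) (Zf : set 'cV[R]_nx)
  (N k : nat) (z0 : 'cV[R]_nx) (Jk : (nat -> 'cV[R]_nu) -> \bar R)
  (v : nat -> 'cV[R]_nu) : Prop :=
  P_feasible_sol A B X U Rx Ru Zf N k z0 v /\
  (forall v', P_feasible_sol A B X U Rx Ru Zf N k z0 v' -> (Jk v <= Jk v')%E).

From HB Require Import structures.
From mathcomp Require Import all_boot all_order all_algebra.
From mathcomp Require Import all_classical all_reals.
From mathcomp Require Import ereal topology normedtype measure probability convex.
Import Order.TTheory GRing.Theory Num.Theory.
Local Open Scope classical_set_scope.
Local Open Scope ring_scope.

(* Recursive feasibility by the classical shift argument: if v is feasible for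
   (P_k) from z, then dropping v_0 and appending the terminal feedback K z_N
   is feasible for (P_{k+1}) from z_1.  The shifted nominal states are the old
   ones, except for the new last state (A + B K) z_N, which stays in Z_f by
   invariance; the constraint tightenings at the new last stage, R^x_{N+k}
   and R^u_{N+k}, are contained in R_f and K R_f, so the terminal assumption
   covers them. *)

Lemma pdiffS {V : zmodType} {S Q Q' : set V} :
  Q `<=` Q' -> pdiff S Q' `<=` pdiff S Q.
Proof. by move=> sQQ' a [Sa SaQ]; split=> // b /sQQ'; apply: SaQ. Qed.

Section ShiftedSolution.

Context {R : ringType} {nx nu : nat}.
Context {A : 'M[R]_nx} {B : 'M[R]_(nx, nu)} {K : 'M[R]_(nu, nx)}.

Lemma eq_in_nom_pred z0 v v' i :
  (forall j, (j < i)%N -> v j = v' j) -> nom_pred A B z0 v i = nom_pred A B z0 v' i.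
Proof.
elim: i => [//|i IHi] eq_vv' /=.
by rewrite IHi ?eq_vv' // => j /ltnW; apply: eq_vv'.
Qed.

Lemma nom_pred_behead z0 v i :
  nom_pred A B (nom_pred A B z0 v 1) (fun j => v j.+1) i = nom_pred A B z0 v i.+1.
Proof. by elim: i => [//|i IHi] /=; rewrite IHi. Qed.

Definition shift_input (v : nat -> 'cV[R]_nu) (u : 'cV[R]_nu) (n : nat) :
    nat -> 'cV[R]_nu :=
  fun i => if (i < n)%N then v i.+1 else u.

Lemma nom_pred_shift_input z0 v u n i : (i <= n)%N ->
  nom_pred A B (nom_pred A B z0 v 1) (shift_input v u n) i = nom_pred A B z0 v i.+1.
Proof.
move=> le_in; rewrite -(nom_pred_behead z0 v i); apply: eq_in_nom_pred => j lt_ji.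
by rewrite /shift_input (leq_trans lt_ji le_in).
Qed.

Lemma nom_pred_shift_input_last z0 v u n :
  nom_pred A B (nom_pred A B z0 v 1) (shift_input v u n) n.+1
  = A *m nom_pred A B z0 v n.+1 + B *m u.
Proof. by rewrite /= nom_pred_shift_input // /shift_input ltnn. Qed.

Context {X : set 'cV[R]_nx} {U : set 'cV[R]_nu}.
Context {Rx : nat -> set 'cV[R]_nx} {Ru : nat -> set 'cV[R]_nu}.
Context {Rf Zf : set 'cV[R]_nx}.

Hypothesis Zf_tight_X : Zf `<=` pdiff X Rf.
Hypothesis Zf_invariant : forall z, Zf z -> Zf ((A + B *m K) *m z).
Hypothesis KZf_tight_U :
  (fun z => K *m z) @` Zf `<=` pdiff U ((fun r => K *m r) @` Rf).

Lemma P_feasible_sol_shift n k z0 v :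
  Rx (n.+1 + k) `<=` Rf -> Ru (n.+1 + k) `<=` (fun r => K *m r) @` Rf ->
  P_feasible_sol A B X U Rx Ru Zf n.+1 k z0 v ->
  let zN := nom_pred A B z0 v n.+1 in
  P_feasible_sol A B X U Rx Ru Zf n.+1 k.+1 (nom_pred A B z0 v 1)
    (shift_input v (K *m zN) n).
Proof.
move=> sRxRf sRuKRf [feas_z [feas_v Zf_zN]] zN.
split; [|split].
- move=> i; rewrite ltnS => le_in; rewrite nom_pred_shift_input // addnS -addSn.
  move: le_in; rewrite leq_eqVlt => /predU1P[-> | lt_in]; last exact: feas_z.
  exact: pdiffS sRxRf _ (Zf_tight_X _ Zf_zN).
- move=> i; rewrite ltnS /shift_input addnS -addSn leq_eqVlt.
  case/predU1P=> [-> | lt_in]; last by rewrite lt_in; apply: feas_v.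
  by rewrite ltnn; apply: pdiffS sRuKRf _ (KZf_tight_U _ _); exists zN.
- by rewrite nom_pred_shift_input_last mulmxA -mulmxDl; apply: Zf_invariant.
Qed.

Lemma P_feasible_succ {n k z0 v} :
  Rx (n.+1 + k) `<=` Rf -> Ru (n.+1 + k) `<=` (fun r => K *m r) @` Rf ->
  P_feasible_sol A B X U Rx Ru Zf n.+1 k z0 v ->
  P_feasible A B X U Rx Ru Zf n.+1 k.+1 (nom_pred A B z0 v 1).
Proof. by move=> sRx sRu feas; eexists; apply: P_feasible_sol_shift feas. Qed.

End ShiftedSolution.

Theorem theorem1
  (R : realType) (d : measure_display) (T : measurableType d) (P : probability T R)
  (nx nu : nat) (A : 'M[R]_nx) (B : 'M[R]_(nx, nu)) (K : 'M[R]_(nu, nx))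
  (Nbar N : nat)
  (W : nat -> T -> 'cV[R]_nx)
  (X : set (convex_lmodType 'cV[R]_nx)) (U : set (convex_lmodType 'cV[R]_nu))
  (px pu : R)
  (Rx : nat -> set 'cV[R]_nx) (Ru : nat -> set 'cV[R]_nu)
  (Rf Zf : set 'cV[R]_nx) :
  convex_set X -> convex_set U ->
  0 <= px <= 1 -> 0 <= pu <= 1 ->
  (* probabilistic k-step reachable sets for the error e(k+1)=(A+BK)e(k)+w(k), e(0)=0 *)
  (forall k, (k <= Nbar)%N ->
     measurable [set t | Rx k (err_proc A B K (fun j => W j t) k)] /\
     (px%:E <= P [set t | Rx k (err_proc A B K (fun j => W j t) k)])%E) ->
  (forall k, (k <= Nbar)%N ->
     measurable [set t | Ru k (K *m err_proc A B K (fun j => W j t) k)] /\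
     (pu%:E <= P [set t | Ru k (K *m err_proc A B K (fun j => W j t) k)])%E) ->
  (forall k, (k <= Nbar)%N -> Rx k `<=` Rf) ->
  (forall k, (k <= Nbar)%N -> Ru k `<=` (fun r => K *m r) @` Rf) ->
  (* terminal invariance assumption *)
  Zf `<=` pdiff X Rf ->
  (forall z, Zf z -> Zf ((A + B *m K) *m z)) ->
  (fun z => K *m z) @` Zf `<=` pdiff U ((fun r => K *m r) @` Rf) ->
  (0 < N)%N -> (N <= Nbar)%N ->
  forall (omega : T)
    (J : nat -> 'cV[R]_nx -> 'cV[R]_nx -> (nat -> 'cV[R]_nu) -> \bar R)
    (x z : nat -> 'cV[R]_nx) (vstar : nat -> nat -> 'cV[R]_nu),
  (* closed loop: z(0) = x(0); v*(k) optimal for (P_k) (whenever (P_k) is feasible);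
     z(k+1) = z_1(k); x(k+1) = A x(k) + B u(k) + w(k), u(k) = K e_0(k) + v*_0(k) *)
  z 0%N = x 0%N ->
  (forall k, (k <= Nbar - N)%N ->
     P_feasible A B X U Rx Ru Zf N k (z k) ->
     P_optimal A B X U Rx Ru Zf N k (z k) (J k (x k) (z k)) (vstar k)) ->
  (forall k, (k < Nbar - N)%N -> z k.+1 = nom_pred A B (z k) (vstar k) 1) ->
  (forall k, (k < Nbar - N)%N ->
     x k.+1 = A *m x k + B *m (K *m (x k - z k) + vstar k 0%N) + W k omega) ->
  P_feasible A B X U Rx Ru Zf N 0 (x 0%N) ->
  forall k, (k <= Nbar - N)%N -> P_feasible A B X U Rx Ru Zf N k (z k).
Proof.
move=> _ _ _ _ _ _ sRxRf sRuKRf Zf_X Zf_inv KZf_U.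
case: N => // n _ le_nNbar omega J x z vstar z0_x0 opt_vstar z_next _ feas0.
elim=> [|k IHk] lt_k; first by rewrite z0_x0.
have [feas_vstar _] := opt_vstar k (ltnW lt_k) (IHk (ltnW lt_k)).
have le_nk : (n.+1 + k <= Nbar)%N by rewrite -leq_subRL //; apply: ltnW.
rewrite z_next //.
exact (P_feasible_succ Zf_X Zf_inv KZf_U (sRxRf _ le_nk) (sRuKRf _ le_nk) feas_vstar).
Qed.
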